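(* Let $A$ be an $n\times n$ matrix with non-negative real entries and $\|A\|_{\max} \le 1$, and let $\lambda_{\max}$ be its Perron eigenvalue (spectral radius). Define \[ \gamma := n\lambda_{\max} - \sum_{i,j=1}^n \min\{A_{ij},A_{ji}\} + \sum_{i,j=1}^n\left(1 + \min\{A_{ij},A_{ji}\} - A_{ij}^2 - A_{ji}^2\right). \] Then $\gamma \ge 0$, and any eigenvalue $\mu$ of $A$ with $\mathrm{Im}(\mu) \ne 0$ satisfies \[ |\mu|^2 \le \min\left\{ \frac{n^2 + n\lambda_{\max} - 2\lambda_{\max}^2 - \gamma}{4},\ \lambda_{\max}^2 \right\} \] and \[ \mathrm{Re}(\mu)^2 \le \min\left\{ \frac{n^2 + 3n\lambda_{\max} - 4\lambda_{\max}^2 - \gamma}{8},\ \lambda_{\max}^2 \right\}. \]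
   Context: $\|A\|_{\max}$ denotes the largest absolute value of an entry of $A$. The Perron eigenvalue of a non-negative matrix is its spectral radius, which is an eigenvalue by Perron–Frobenius theory. *)

From HB Require Import structures.
From mathcomp Require Import all_boot all_order all_algebra.
From mathcomp Require Import complex.
Set Implicit Arguments. Unset Strict Implicit. Unset Printing Implicit Defensive.
Import Order.TTheory GRing.Theory Num.Theory.
Local Open Scope ring_scope.

Definition cmx (R : rcfType) (n : nat) (A : 'M[R]_n) : 'M[R[i]]_n :=
  map_mx (fun x : R => Complex x 0) A.

Definition is_ceig (R : rcfType) (n : nat) (A : 'M[R]_n) (a b : R) : Prop :=
  eigenvalue (cmx A) (Complex a b).

Definition spectral_radius_is (R : rcfType) (n : nat) (A : 'M[R]_n) (r : R) : Prop :=
  [/\ 0 <= r,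
      (exists a b, is_ceig A a b /\ a ^+ 2 + b ^+ 2 = r ^+ 2) &
      (forall a b, is_ceig A a b -> a ^+ 2 + b ^+ 2 <= r ^+ 2)].

Definition gamma (R : rcfType) (n : nat) (A : 'M[R]_n) (lam : R) : R :=
  n%:R * lam - \sum_(i < n) \sum_(j < n) Num.min (A i j) (A j i)
  + \sum_(i < n) \sum_(j < n)
      (1 + Num.min (A i j) (A j i) - A i j ^+ 2 - A j i ^+ 2).

From HB Require Import structures.
From mathcomp Require Import all_boot all_order all_algebra.
From mathcomp Require Import complex polyrcf.
From mathcomp Require Import lra.
Set Implicit Arguments. Unset Strict Implicit. Unset Printing Implicit Defensive.
Import Order.TTheory GRing.Theory Num.Theory Normc.
Local Open Scope ring_scope.

(* If every real root of char_poly A lies below t, then t I - A is monotone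
   ((t I - A) x >= 0 implies x >= 0) for nonnegative A; this goes by induction
   on the size, splitting off the first row and column, whose Schur complement is
   then a positive scalar.  Testing monotonicity on the modulus of a left
   eigenvector gives Wielandt's comparison: an eigenvalue of a matrix dominated
   entrywise in modulus by A has modulus at most lam_max, and lam_max is itself
   an eigenvalue of A.  The entry sum of the symmetric matrix (min (A_ij, A_ji))
   is at most n times its spectral radius, so sum min (A_ij, A_ji) <= n lam_max;
   with A_ij^2 + A_ji^2 <= 1 + min (A_ij, A_ji) and
   gamma = n lam_max + n^2 - 2 sum A_ij^2 this gives gamma >= 0.  In a unitary
   triangularization of A, lam_max, mu and conj mu occupy three diagonal places,
   so Schur's inequality gives lam_max^2 + 2 |mu|^2 <= sum A_ij^2; adding the real
   part of tr (A^2) = sum A_ij A_ji <= n lam_max bounds Re mu. *)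

Section MonotoneMatrix.
Variable R : numFieldType.

Definition nnegmx m n (M : 'M[R]_(m, n)) := forall i j, 0 <= M i j.

Definition monotone_mx n (M : 'M[R]_n) :=
  forall k (X : 'M[R]_(n, k)), nnegmx (M *m X) -> nnegmx X.

Lemma nnegmxD m n (A B : 'M[R]_(m, n)) :
  nnegmx A -> nnegmx B -> nnegmx (A + B).
Proof. by move=> A0 B0 i j; rewrite mxE addr_ge0. Qed.

Lemma nnegmxM m n p (A : 'M[R]_(m, n)) (B : 'M[R]_(n, p)) :
  nnegmx A -> nnegmx B -> nnegmx (A *m B).
Proof. by move=> A0 B0 i j; rewrite mxE sumr_ge0 // => l _; rewrite mulr_ge0. Qed.

Lemma nnegmx_colP m1 m2 n (A : 'M[R]_(m1, n)) (B : 'M[R]_(m2, n)) :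
  nnegmx (col_mx A B) <-> nnegmx A /\ nnegmx B.
Proof.
split=> [AB0 | [A0 B0] i j]; last by rewrite mxE; case: splitP.
by split=> i j; [move: (AB0 (lshift _ i) j); rewrite col_mxEu
                | move: (AB0 (rshift _ i) j); rewrite col_mxEd].
Qed.

Lemma monotone_invmx_nneg n (M : 'M[R]_n) :
  monotone_mx M -> M \in unitmx -> nnegmx (invmx M).
Proof. by move=> monM uM; apply: monM => i j; rewrite mulmxV // mxE ler0n. Qed.

Lemma monotone_scalar_mx n (a : R) : 0 < a -> monotone_mx (a%:M : 'M_n).
Proof.
move=> a_gt0 k X aX0 i j.
by move: (aX0 i j); rewrite mul_scalar_mx mxE pmulr_rge0.
Qed.

Lemma monotone_block_mx m1 m2 (D : 'M[R]_m1) (U : 'M[R]_(m1, m2))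
    (V : 'M[R]_(m2, m1)) (M : 'M[R]_m2) :
  nnegmx U -> nnegmx V -> M \in unitmx -> monotone_mx M ->
  monotone_mx (D - U *m invmx M *m V) -> monotone_mx (block_mx D (- U) (- V) M).
Proof.
move=> U0 V0 uM monM monS k X; rewrite -[X]vsubmxK mul_block_col.
move: (usubmx X) (dsubmx X) => X1 X2 /nnegmx_colP[Z1_0 Z2_0].
have iM0 := monotone_invmx_nneg monM uM.
set Z2 := - V *m X1 + M *m X2 in Z2_0.
have eX2 : X2 = invmx M *m Z2 + invmx M *m V *m X1.
  by rewrite -mulmxA -mulmxDr /Z2 mulNmx addrAC addNr add0r mulKmx.
have X1_0 : nnegmx X1.
  apply: monS; have -> : (D - U *m invmx M *m V) *m X1 =
      (D *m X1 + - U *m X2) + U *m invmx M *m Z2.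
    by rewrite {1}eX2 mulmxBl mulNmx mulmxDr !mulmxA opprD addrA addrAC subrK.
  by apply: nnegmxD => //; apply: nnegmxM => //; apply: nnegmxM.
apply/nnegmx_colP; split=> //; rewrite eX2.
by apply: nnegmxD; apply: nnegmxM => //; apply: nnegmxM.
Qed.

End MonotoneMatrix.

Lemma det_block_schur (R : comUnitRingType) m1 m2 (D : 'M[R]_m1)
    (U : 'M[R]_(m1, m2)) (V : 'M[R]_(m2, m1)) (M : 'M[R]_m2) :
  M \in unitmx ->
  \det (block_mx D U V M) = \det M * \det (D - U *m invmx M *m V).
Proof.
move=> uM; have -> : block_mx D U V M =
    block_mx 1%:M (U *m invmx M) 0 1%:M *m block_mx (D - U *m invmx M *m V) 0 V M.
  by rewrite mulmx_block !mul1mx !mul0mx ?mulmx0 ?addr0 ?add0r subrK mulmxKV.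
by rewrite det_mulmx det_ublock det_lblock !det1 !mul1r mulrC.
Qed.

Lemma scalar_mxB_block (R : zmodType) m1 m2 (A : 'M[R]_(m1 + m2)) a :
  a%:M - A = block_mx (a%:M - ulsubmx A) (- ursubmx A) (- dlsubmx A)
                      (a%:M - drsubmx A).
Proof.
by rewrite -[A in LHS]submxK [a%:M]scalar_mx_block opp_block_mx add_block_mx !add0r.
Qed.

Lemma char_poly_trmx (R : comNzRingType) n (A : 'M[R]_n) :
  char_poly A^T = char_poly A.
Proof.
rewrite /char_poly -det_tr; congr (\det _); apply/matrixP => i j.
by rewrite !mxE eq_sym.
Qed.

Section CharPolyRoots.
Variable R : rcfType.
Implicit Types (p : {poly R}) (s t : R).

Definition roots_lt p t := forall x, root p x -> x < t.

Lemma horner_char_poly n (A : 'M[R]_n) s : (char_poly A).[s] = \det (s%:M - A).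
Proof.
rewrite /char_poly -[_.[s]]/(horner_eval s _) -det_map_mx.
congr (\det _); apply/matrixP => i j; rewrite !mxE /horner_eval /=.
by rewrite horner_evalE hornerD hornerN hornerMn hornerX hornerC.
Qed.

Lemma monic_roots_lt_gt0 p t : p \is monic -> roots_lt p t -> 0 < p.[t].
Proof.
move=> /monicP lc_p rootsp.
have [N pN] : exists N, forall x, N <= x -> 1 <= p.[x].
  by rewrite -lc_p; apply: poly_pinfty_gt_lc; rewrite lc_p ltr01.
rewrite ltNge; apply/negP => pt_le0.
have tM : t <= Num.max N t by rewrite le_max lexx orbT.
have pM : 1 <= p.[Num.max N t] by rewrite pN // le_max lexx.
have [x] := polyrcf.poly_ivt tM (mulr_le0_ge0 pt_le0 (le_trans ler01 pM)).
by rewrite in_itv /= => /andP[tx _] /rootsp; rewrite ltNge tx.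
Qed.

Lemma roots_lt_det_gt0 n (A : 'M[R]_n) s :
  roots_lt (char_poly A) s -> 0 < \det (s%:M - A).
Proof. by rewrite -horner_char_poly; apply/monic_roots_lt_gt0/char_poly_monic. Qed.

Lemma max_root p x : p != 0 -> root p x ->
  exists y, [/\ x <= y, root p y & forall z, root p z -> z <= y].
Proof.
move=> p_neq0 rx; have lt_cb z := itvP (root_in_cauchy_bound p_neq0 z).
case: (prev_rootP p x (cauchy_bound p)) => [/eqP|y _ /eqP ry yI noroot_y|_ _ _ noroot_x];
  first by rewrite (negPf p_neq0).
- exists y; split=> // [|z rz]; first by move: yI; rewrite in_itv => /andP[/ltW].
  rewrite leNgt; apply/negP => yz.
  by move: (noroot_y z); rewrite in_itv /= yz (lt_cb _ rz) rz => /(_ isT).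
- exists x; split=> // z rz; rewrite leNgt; apply/negP => xz.
  by move: (noroot_x z); rewrite in_itv /= xz (lt_cb _ rz) rz => /(_ isT).
Qed.

Lemma horner_le0_right p y : (forall s, y < s -> p.[s] <= 0) -> p.[y] <= 0.
Proof.
move=> p_le0; rewrite leNgt; apply/negP => py_gt0.
have [d d_gt0 near_y] := poly_cont y p py_gt0.
have d2_gt0 : 0 < d / 2 by rewrite divr_gt0.
have := near_y (y + d / 2); rewrite addrC addKr gtr0_norm // ltr_pdivrMr //.
rewrite ltr_pMr // ltr1n => /(_ isT); rewrite distrC.
have := p_le0 (y + d / 2); rewrite ltrDl d2_gt0 => /(_ isT) pyd_le0.
move=> /(le_lt_trans (ler_norm _)); lra.
Qed.

Lemma horner_char_poly_block n (A : 'M[R]_(1 + n)) s :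
  (s%:M - drsubmx A) \in unitmx ->
  (char_poly A).[s] = \det (s%:M - drsubmx A) *
    ((s%:M - ulsubmx A) - ursubmx A *m invmx (s%:M - drsubmx A) *m dlsubmx A) 0 0.
Proof.
move=> uM; rewrite horner_char_poly scalar_mxB_block det_block_schur //.
by rewrite mulNmx mulmxN mulNmx opprK det_mx11.
Qed.

(* For [y] the largest root of [char_poly A'], the polynomial
   [g := char_poly A - ('X - A 0 0) * char_poly A'] is [<= 0] to the right of [y]
   by the Schur complement formula, whereas [g.[y] = (char_poly A).[y] > 0]
   if [y >= t]. *)
Lemma roots_lt_drsubmx n (A : 'M[R]_(1 + n)) t :
  nnegmx A ->
  (forall s, roots_lt (char_poly (drsubmx A)) s -> monotone_mx (s%:M - drsubmx A)) ->
  roots_lt (char_poly A) t -> roots_lt (char_poly (drsubmx A)) t.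
Proof.
move=> A0 monA' rootsA x0 rx0; rewrite ltNge; apply/negP => tx0.
set A' := drsubmx A in monA' rx0 *; set p' := char_poly A' in monA' rx0 *.
have [y [x0y ry ymax]] := max_root (monic_neq0 (char_poly_monic A')) rx0.
pose g := char_poly A - ('X - (ulsubmx A 0 0)%:P) * p'.
have g_le0 s : y < s -> g.[s] <= 0.
  move=> ys; have rootsA's : roots_lt p' s := fun z rz => le_lt_trans (ymax z rz) ys.
  have det_gt0 := roots_lt_det_gt0 rootsA's.
  have uM : s%:M - A' \in unitmx by rewrite unitmxE unitfE gt_eqF.
  have [U0 V0] : nnegmx (ursubmx A) /\ nnegmx (dlsubmx A).
    by split=> i j; rewrite !mxE.
  have Q_ge0 : 0 <= (ursubmx A *m invmx (s%:M - A') *m dlsubmx A) 0 0.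
    have := monotone_invmx_nneg (monA' s rootsA's) uM.
    by move=> iM0; apply: nnegmxM => //; apply: nnegmxM.
  rewrite /g !hornerE horner_char_poly_block // horner_char_poly.
  move: det_gt0 Q_ge0; set D := \det _; set Q := _ *m _ *m _.
  rewrite !mxE eqxx mulr1n; nra.
have rootsAy : roots_lt (char_poly A) y.
  by move=> z /rootsA zt; rewrite (lt_le_trans zt) // (le_trans tx0 x0y).
have : 0 < g.[y].
  rewrite /g hornerD hornerN hornerM (rootP ry) mulr0 subr0.
  exact: monic_roots_lt_gt0 (char_poly_monic A) rootsAy.
by rewrite ltNge horner_le0_right.
Qed.

Theorem monotone_roots_lt n (A : 'M[R]_n) t :
  nnegmx A -> roots_lt (char_poly A) t -> monotone_mx (t%:M - A).
Proof.
elim: n A t => [A t _ _ k X _ [] // | n IH].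
rewrite -[n.+1]/(1 + n)%N => A t A0 rootsA.
have A'0 : nnegmx (drsubmx A) by move=> i j; rewrite !mxE.
have rootsA' := roots_lt_drsubmx A0 (fun s => IH _ s A'0) rootsA.
have uM : t%:M - drsubmx A \in unitmx.
  by rewrite unitmxE unitfE gt_eqF // roots_lt_det_gt0.
have := monic_roots_lt_gt0 (char_poly_monic A) rootsA.
rewrite (horner_char_poly_block uM) pmulr_rgt0 ?roots_lt_det_gt0 // => schur_gt0.
rewrite scalar_mxB_block; apply: monotone_block_mx => //.
- by move=> i j; rewrite !mxE.
- by move=> i j; rewrite !mxE.
- exact: IH.
- by rewrite [X in monotone_mx X]mx11_scalar; apply: monotone_scalar_mx.
Qed.

End CharPolyRoots.

Lemma eigenvalue_similar (F : fieldType) n (P B : 'M[F]_n) z :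
  P \in unitmx -> eigenvalue B z -> eigenvalue (P *m B *m invmx P) z.
Proof.
move=> Pu Bz; have iPu : invmx P \in unitmx by rewrite unitmx_inv.
apply: (eigenvalue_conjmx (V := invmx P)).
- by apply: submx_full; rewrite row_full_unit.
- by rewrite row_free_unit.
- by rewrite conjumx // invmxK !mulmxA mulVmx // mul1mx mulmxKV.
Qed.

Lemma eigenvalue_trig (F : fieldType) n (T : 'M[F]_n) z :
  is_trig_mx T -> eigenvalue T z -> exists k, T k k = z.
Proof.
move=> T_trig; rewrite eigenvalue_root_char char_poly_trig // /root horner_prod.
by move=> /prodf_eq0[k _]; rewrite hornerXsubC subr_eq0 => /eqP->; exists k.
Qed.

Lemma mxtrace_trig_sqr (R : comPzSemiRingType) n (T : 'M[R]_n) :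
  is_trig_mx T -> \tr (T *m T) = \sum_k T k k ^+ 2.
Proof.
move=> /is_trig_mxP T_trig; rewrite /mxtrace; apply: eq_bigr => k _.
rewrite mxE (bigD1 k) //= big1 ?addr0 ?expr2 // => j jk.
have [kj|jk'|/val_inj e] := ltngtP k j; last by rewrite e eqxx in jk.
- by rewrite T_trig // mul0r.
- by rewrite (T_trig j k jk') mulr0.
Qed.

Section UnitaryMatrix.
Variable C : numClosedFieldType.
Local Open Scope sesquilinear_scope.

Lemma trmxC_mul m n p (A : 'M[C]_(m, n)) (B : 'M[C]_(n, p)) :
  (A *m B)^t* = B^t* *m A^t*.
Proof. by rewrite trmx_mul map_mxM. Qed.

Lemma mxtrace_mul_trmxC m n (M : 'M[C]_(m, n)) :
  \tr (M *m M^t*) = \sum_i \sum_j `|M i j| ^+ 2.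
Proof.
rewrite /mxtrace; apply: eq_bigr => i _; rewrite mxE.
by apply: eq_bigr => j _; rewrite !mxE normCK.
Qed.

Lemma spectral_diag_eigenvalue n (S : 'M[C]_n) k :
  S \is normalmx -> eigenvalue S (spectral_diag S 0 k).
Proof.
move=> /orthomx_spectralP; have Pu := spectral_unit S.
set P := spectralmx S; set D := spectral_diag S => S_eq.
apply/eigenvalueP; exists (row k P).
  rewrite -row_mul S_eq !mulmxA mulmxV // mul1mx mul_diag_mx.
  by apply/rowP => j; rewrite !mxE.
apply/negP => /eqP Pk0; have /rowP/(_ k) := congr1 (row k) (mulmxV Pu).
by rewrite row_mul Pk0 mul0mx !mxE eqxx => /eqP; rewrite eq_sym oner_eq0.
Qed.

(* With [S = P^t* D P] and [w = 1 P^t*], the sum of the entries of [S] is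
   [\sum_k |w_k|^2 D_k], while [\sum_k |w_k|^2 = n]. *)
Lemma normal_sum_le n (S : 'M[C]_n) r :
  S \is normalmx -> (forall d, eigenvalue S d -> `|d| <= r) ->
  `|\sum_i \sum_j S i j| <= n%:R * r.
Proof.
move=> S_normal eig_le; have /orthomx_spectralP S_eq := S_normal.
set P := spectralmx S in S_eq; set D := spectral_diag S in S_eq.
have Pu : P \is unitarymx := spectral_unitarymx S.
pose u : 'rV[C]_n := const_mx 1; pose w := u *m P^t*.
have u_real : u ^t* = u^T by apply/matrixP => i j; rewrite !mxE conjC1.
have sumS : \sum_i \sum_j S i j = \sum_k `|w 0 k| ^+ 2 * D 0 k.
  transitivity ((u *m S *m u^T) 0 0).
    rewrite exchange_big mxE; apply: eq_bigr => j _; rewrite !mxE big_distrl /=.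
    by apply: eq_bigr => i _; rewrite !mxE mul1r mulr1.
  transitivity ((w *m diag_mx D *m w^t*) 0 0).
    by rewrite S_eq /w trmxC_mul trmxCK u_real (invmx_unitary Pu) !mulmxA.
  rewrite mxE; apply: eq_bigr => k _; rewrite mul_mx_diag !mxE normCK.
  by rewrite mulrAC.
have sum_w : \sum_k `|w 0 k| ^+ 2 = n%:R.
  transitivity ((w *m w^t*) 0 0).
    by rewrite mxE; apply: eq_bigr => k _; rewrite !mxE normCK.
  rewrite /w trmxC_mul trmxCK mulmxA mulmxKtV // u_real mxE.
  by rewrite (eq_bigr (fun _ => 1)) ?sumr_const ?card_ord // => k _; rewrite !mxE mulr1.
rewrite sumS -sum_w mulr_suml (le_trans (ler_norm_sum _ _ _)) //.
apply: ler_sum => k _; rewrite normrM ger0_norm ?exprn_ge0 // ler_wpM2l ?exprn_ge0 //.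
exact/eig_le/spectral_diag_eigenvalue.
Qed.

Lemma Schur_diag n (B : 'M[C]_n) :
  exists T : 'M[C]_n, [/\ forall z, eigenvalue B z -> exists k, T k k = z,
    \sum_k `|T k k| ^+ 2 <= \sum_i \sum_j `|B i j| ^+ 2 &
    \sum_k T k k ^+ 2 = \tr (B *m B)].
Proof.
case: n B => [B | n B].
  exists B; split; last by rewrite /mxtrace !big_ord0.
  - by move=> z /eigenvalueP[v _]; rewrite thinmx0 eqxx.
  - by rewrite !big_ord0.
have [P Pu] := Schur B (ltn0Sn n); have Punit := unitarymx_unit Pu.
rewrite /similar_to conjumx //; set T := P *m B *m invmx P => T_trig.
have frobT : \sum_i \sum_j `|T i j| ^+ 2 = \sum_i \sum_j `|B i j| ^+ 2.
  rewrite -!mxtrace_mul_trmxC /T invmx_unitary // !trmxC_mul trmxCK.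
  rewrite !mulmxA (mulmxKtV (P *m B) Pu) // mxtrace_mulC !mulmxA.
  by rewrite -(invmx_unitary Pu) mulVmx // mul1mx.
exists T; split.
- by move=> z /(eigenvalue_similar Punit); apply: eigenvalue_trig.
- rewrite -frobT; apply: ler_sum => k _; rewrite (bigD1 k) //= lerDl.
  by apply: sumr_ge0 => j _; rewrite exprn_ge0.
- rewrite -mxtrace_trig_sqr // /T !mulmxA mulmxKV // mxtrace_mulC !mulmxA.
  by rewrite mulVmx ?mul1mx.
Qed.

End UnitaryMatrix.

Section ComplexModulus.
Variable R : rcfType.

Lemma normcE (z : R[i]) : `|z| = (normc z)%:C%C.
Proof. by case: z => a b; rewrite normc_def. Qed.

Lemma normc_real (x : R) : normc (x%:C)%C = `|x|.
Proof. by rewrite /= expr0n addr0 sqrtr_sqr. Qed.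

Lemma normc_ge0 (z : R[i]) : 0 <= normc z.
Proof. by case: z => a b; apply: sqrtr_ge0. Qed.

Lemma normc_sum I (r : seq I) (F : I -> R[i]) :
  normc (\sum_(i <- r) F i) <= \sum_(i <- r) normc (F i).
Proof.
elim/big_ind2: _ => [|x1 y1 x2 y2 le1 le2|i _]; first by rewrite normc0.
  exact: le_trans (le_normcD _ _) (lerD le1 le2).
by [].
Qed.

Lemma Re_sum I (r : seq I) (F : I -> R[i]) :
  complex.Re (\sum_(i <- r) F i) = \sum_(i <- r) complex.Re (F i).
Proof. by apply: (big_morph _ (id1 := 0) (op1 := +%R)) => // [[x1 y1] [x2 y2]]. Qed.

End ComplexModulus.

Section Wielandt.
Variable R : rcfType.

Lemma subinvariant_not_roots_lt n (A : 'M[R]_n) (y : 'cV[R]_n) s :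
  nnegmx A -> nnegmx y -> y != 0 -> nnegmx (A *m y - s *: y) ->
  ~ roots_lt (char_poly A) s.
Proof.
move=> A0 y0 y_neq0 Ay_ge rootsA; apply/negP: y_neq0; apply/negPn/eqP/matrixP => i j.
have /(_ i j) : nnegmx (- y).
  apply: (monotone_roots_lt A0 rootsA).
  by rewrite mulmxN mulmxBl mul_scalar_mx opprB.
by rewrite !mxE oppr_ge0 => y_le0; apply/le_anti; rewrite y_le0 y0.
Qed.

(* Wielandt's comparison; the test vector is the modulus of a left eigenvector. *)
Lemma dominated_eigenvalue_not_roots_lt n (S : 'M[R[i]]_n) (A : 'M[R]_n) d :
  (forall i j, normc (S i j) <= A i j) -> eigenvalue S d ->
  ~ roots_lt (char_poly A) (normc d).
Proof.
move=> SA /eigenvalueP[v vS v_neq0]; rewrite -char_poly_trmx.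
apply: (@subinvariant_not_roots_lt _ _ (\col_i normc (v 0 i))).
- by move=> i j; rewrite mxE (le_trans (normc_ge0 (S j i))).
- by move=> i j; rewrite mxE normc_ge0.
- apply: contra_neq v_neq0 => /matrixP y0; apply/rowP => i.
  by have := y0 i 0; rewrite !mxE => /eq0_normc.
move=> j k; rewrite ord1 !mxE subr_ge0 -normcM.
have -> : d * v 0 j = \sum_i v 0 i * S i j.
  by have := congr1 (fun M : 'rV_n => M 0 j) vS; rewrite !mxE.
apply: le_trans (normc_sum _ _) _; apply: ler_sum => i _.
by rewrite normcM !mxE mulrC ler_wpM2r ?normc_ge0.
Qed.

End Wielandt.

Lemma le_of_sqr_le (R : realDomainType) (x y : R) :
  0 <= y -> x ^+ 2 <= y ^+ 2 -> x <= y.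
Proof. by move=> y_ge0 xy2; rewrite leNgt; apply/negP => yx; nra. Qed.

Lemma cmxE (R : rcfType) n (A : 'M[R]_n) : cmx A = map_mx (real_complex R) A.
Proof. by []. Qed.

Lemma root_is_ceig (R : rcfType) n (A : 'M[R]_n) x :
  root (char_poly A) x -> is_ceig A x 0.
Proof.
rewrite /is_ceig eigenvalue_root_char cmxE -map_char_poly.
by rewrite -[(x +i* 0)%C]/(x%:C)%C fmorph_root.
Qed.

Lemma is_ceig_conj (R : rcfType) n (A : 'M[R]_n) a b :
  is_ceig A a b -> is_ceig A a (- b).
Proof.
rewrite /is_ceig !eigenvalue_root_char cmxE -map_char_poly => rab.
rewrite -[(a +i* - b)%C]/((a +i* b)^*)%C -complex_root_conj -map_poly_comp.
by rewrite (eq_map_poly (g := real_complex R)) // => x /=; rewrite oppr0.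
Qed.

Section SpectralRadius.
Local Open Scope sesquilinear_scope.
Variables (R : rcfType) (n : nat) (A : 'M[R]_n) (lam : R).
Hypothesis lam_ge0 : 0 <= lam.
Hypothesis eig_le : forall a b, is_ceig A a b -> a ^+ 2 + b ^+ 2 <= lam ^+ 2.

Lemma roots_lt_spectral_bound t : lam < t -> roots_lt (char_poly A) t.
Proof.
move=> lam_lt_t x /root_is_ceig /eig_le; rewrite expr0n addr0.
by move=> /(le_of_sqr_le lam_ge0) /le_lt_trans; apply.
Qed.

Lemma dominated_eigenvalue_le (S : 'M[R[i]]_n) d :
  (forall i j, normc (S i j) <= A i j) -> eigenvalue S d -> normc d <= lam.
Proof.
move=> SA Sd; rewrite leNgt; apply/negP => /roots_lt_spectral_bound.
exact: dominated_eigenvalue_not_roots_lt SA Sd.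
Qed.

Lemma spectral_radius_is_eigenvalue :
  nnegmx A -> (exists a b, is_ceig A a b /\ a ^+ 2 + b ^+ 2 = lam ^+ 2) ->
  is_ceig A lam 0.
Proof.
move=> A0 [a [b [Aab ab_lam]]]; apply/root_is_ceig/negPn/negP => nroot.
have normc_ab : normc (a +i* b)%C = lam by rewrite /= ab_lam sqrtr_sqr ger0_norm.
apply: (@dominated_eigenvalue_not_roots_lt _ _ (cmx A) A _ _ Aab).
  by move=> i j; rewrite mxE normc_real ger0_norm.
rewrite normc_ab => x rx; rewrite lt_neqAle.
have := eig_le (root_is_ceig rx); rewrite expr0n addr0 => /(le_of_sqr_le lam_ge0) ->.
by rewrite andbT; apply: contraNneq nroot => <-.
Qed.

Lemma sum_min_le : nnegmx A ->
  \sum_i \sum_j Num.min (A i j) (A j i) <= n%:R * lam.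
Proof.
move=> A0; pose M := \matrix_(i, j) Num.min (A i j) (A j i).
have M_normal : cmx M \is normalmx.
  suff M_herm : (cmx M)^t* = cmx M by apply/normalmxP; rewrite M_herm.
  by apply/matrixP => i j; rewrite !mxE minC; apply: conjc_real.
have M_dom i j : normc (cmx M i j) <= A i j.
  by rewrite mxE normc_real mxE ger0_norm ?ge_min ?lexx // le_min !A0.
have M_eig d : eigenvalue (cmx M) d -> `|d| <= (lam%:C)%C.
  by move=> Md; rewrite normcE lecR (dominated_eigenvalue_le M_dom Md).
have := normal_sum_le M_normal M_eig.
have -> : \sum_i \sum_j cmx M i j = (\sum_i \sum_j Num.min (A i j) (A j i))%:C%C.
  rewrite rmorph_sum; apply: eq_bigr => i _; rewrite rmorph_sum.
  by apply: eq_bigr => j _; rewrite !mxE.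
rewrite -(rmorph_nat (real_complex R)) -rmorphM normcE lecR normc_real.
exact: le_trans (ler_norm _).
Qed.

End SpectralRadius.

Lemma sum_three_le (R : numDomainType) n (f : 'I_n -> R) k1 k2 k3 :
  k1 != k2 -> k1 != k3 -> k2 != k3 -> (forall k, 0 <= f k) ->
  f k1 + f k2 + f k3 <= \sum_k f k.
Proof.
move=> k12 k13 k23 f_ge0.
rewrite (bigD1 k1) // (bigD1 k2) 1?eq_sym //= (bigD1 k3) /=.
  by rewrite !addrA lerDl sumr_ge0.
by rewrite ![k3 == _]eq_sym k13 k23.
Qed.

(* [lam], [a + i b] and [a - i b] occupy three different diagonal places of the
   triangular form; summing [|T_kk|^2] and [Re (T_kk^2)] over them gives the bounds. *)
Lemma real_eigenvalue_sq_bounds (R : rcfType) n (A : 'M[R]_n) lam a b :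
  is_ceig A lam 0 -> is_ceig A a b -> b != 0 ->
  lam ^+ 2 + 2 * (a ^+ 2 + b ^+ 2) <= \sum_i \sum_j A i j ^+ 2 /\
  2 * (lam ^+ 2 + 2 * a ^+ 2) <=
    \sum_i \sum_j A i j ^+ 2 + \sum_i \sum_j A i j * A j i.
Proof.
move=> Alam Aab b_neq0; have Aab' := is_ceig_conj Aab.
have [T [T_eig T_frob T_tr]] := Schur_diag (cmx A).
have [k1 T1] := T_eig _ Alam; have [k2 T2] := T_eig _ Aab.
have [k3 T3] := T_eig _ Aab'.
have k12 : k1 != k2.
  by apply: contraNneq b_neq0 => e; move: T2; rewrite -e T1 => -[_ <-].
have k13 : k1 != k3.
  apply: contraNneq b_neq0 => e; move: T3; rewrite -e T1 => -[_ /eqP].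
  by rewrite eq_sym oppr_eq0.
have k23 : k2 != k3.
  apply: contraNneq b_neq0 => e; move: T3; rewrite -e T2 => -[bNb].
  by apply/eqP; lra.
pose re k := complex.Re (T k k); pose im k := complex.Im (T k k).
have sum_norm : \sum_k (re k ^+ 2 + im k ^+ 2) <= \sum_i \sum_j A i j ^+ 2.
  rewrite -lecR !rmorph_sum (eq_bigr _ (fun k _ => add_Re2_Im2 (T k k))).
  apply: le_trans T_frob _; apply: ler_sum => i _; rewrite rmorph_sum.
  apply: ler_sum => j _; rewrite mxE normcE normc_real -rmorphXn.
  by rewrite real_normK ?num_real.
have sum_re : \sum_k (re k ^+ 2 - im k ^+ 2) = \sum_i \sum_j A i j * A j i.
  transitivity (complex.Re (\sum_k T k k ^+ 2)).
    rewrite Re_sum; apply: eq_bigr => k _; rewrite /re /im.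
    by case: (T k k) => x y; rewrite /= !expr2.
  rewrite T_tr /mxtrace Re_sum; apply: eq_bigr => i _; rewrite mxE Re_sum.
  by apply: eq_bigr => j _; rewrite !mxE /= !mulr0 subr0.
have [re1 im1] : re k1 = lam /\ im k1 = 0 by rewrite /re /im T1.
have [re2 im2] : re k2 = a /\ im k2 = b by rewrite /re /im T2.
have [re3 im3] : re k3 = a /\ im k3 = - b by rewrite /re /im T3.
have sum_split : \sum_k (re k ^+ 2 + im k ^+ 2) + \sum_k (re k ^+ 2 - im k ^+ 2) =
    2 * \sum_k re k ^+ 2.
  rewrite -big_split /= mulr_sumr; apply: eq_bigr => k _.
  by rewrite addrACA subrr addr0 mulr_natl mulr2n.
have := sum_three_le (f := fun k => re k ^+ 2) k12 k13 k23 (fun k => sqr_ge0 _).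
have := sum_three_le (f := fun k => re k ^+ 2 + im k ^+ 2) k12 k13 k23
  (fun k => addr_ge0 (sqr_ge0 _) (sqr_ge0 _)).
by rewrite /= re1 im1 re2 im2 re3 im3 sqrrN expr0n /=; split; lra.
Qed.

Lemma sum_entries_bounds (R : realDomainType) n (A : 'M[R]_n) :
  (forall i j, 0 <= A i j /\ A i j <= 1) ->
  \sum_i \sum_j A i j * A j i <= \sum_i \sum_j Num.min (A i j) (A j i) /\
  2 * \sum_i \sum_j A i j ^+ 2 <= n%:R ^+ 2 + \sum_i \sum_j Num.min (A i j) (A j i).
Proof.
move=> A01; split.
  apply: ler_sum => i _; apply: ler_sum => j _; rewrite le_min.
  by have [? ?] := A01 i j; have [? ?] := A01 j i; apply/andP; split; nra.
have -> : 2 * \sum_i \sum_j A i j ^+ 2 = \sum_i \sum_j (A i j ^+ 2 + A j i ^+ 2).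
  rewrite (eq_bigr _ (fun i _ => big_split _ _ _ _ _)) big_split /=.
  by rewrite [X in _ = _ + X]exchange_big mulr_natl mulr2n.
have -> : n%:R ^+ 2 + \sum_i \sum_j Num.min (A i j) (A j i) =
    \sum_i \sum_j (1 + Num.min (A i j) (A j i)).
  rewrite (eq_bigr _ (fun i _ => big_split _ _ _ _ _)) big_split /=.
  by rewrite !sumr_const card_ord expr2 mulr_natr.
apply: ler_sum => i _; apply: ler_sum => j _.
have [? ?] := A01 i j; have [? ?] := A01 j i.
by case: (leP (A i j) (A j i)) => ?; nra.
Qed.

Lemma gammaE (R : rcfType) n (A : 'M[R]_n) lam :
  gamma A lam = n%:R * lam + n%:R ^+ 2 - 2 * \sum_i \sum_j A i j ^+ 2.
Proof.
rewrite /gamma; set m := \sum_i \sum_j Num.min _ _.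
under eq_bigr => i _ do rewrite !sumrB big_split /=.
rewrite !sumrB big_split /= -/m [\sum_i \sum_j A j i ^+ 2]exchange_big.
by rewrite !sumr_const card_ord expr2 mulr_natr; lra.
Qed.

Theorem lemma3 (R : rcfType) (n : nat) (A : 'M[R]_n) (lam : R) :
  (forall i j, 0 <= A i j /\ A i j <= 1) ->
  spectral_radius_is A lam ->
  0 <= gamma A lam /\
  (forall a b : R, is_ceig A a b -> b != 0 ->
     a ^+ 2 + b ^+ 2 <=
       Num.min ((n%:R ^+ 2 + n%:R * lam - 2 * lam ^+ 2 - gamma A lam) / 4)
               (lam ^+ 2) /\
     a ^+ 2 <=
       Num.min ((n%:R ^+ 2 + 3 * n%:R * lam - 4 * lam ^+ 2 - gamma A lam) / 8)
               (lam ^+ 2)).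
Proof.
move=> A01 [lam_ge0 lam_attained eig_le].
have A0 : nnegmx A by move=> i j; case: (A01 i j).
have min_le := sum_min_le lam_ge0 eig_le A0.
have [prod_le sqr_le] := sum_entries_bounds A01.
have A_lam := spectral_radius_is_eigenvalue lam_ge0 eig_le A0 lam_attained.
rewrite gammaE; split; first lra.
move=> a b Aab b_neq0; have ab_le := eig_le a b Aab.
have [sqr_bound re_bound] := real_eigenvalue_sq_bounds A_lam Aab b_neq0.
have b2_ge0 := sqr_ge0 b.
by rewrite !le_min; split; apply/andP; split; lra.
Qed.
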